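(* Let $\operatorname{char}(k)\ne2$, let $a_1,\dots,a_r\in X$ and $\mu=[a_r,\dots,a_1]_R$. Then: (i) for every $j$ with $2\le j<r$, $$\mu\sim(-1)^{|a_j||a_{j+1}\cdots a_r|}[a_j,a_r,\dots,a_{j+1},a_{j-1},\dots,a_1]_R;$$ (ii) for all $i,j$ with $2\le j<i\le r$, $$\mu\sim(-1)^{|a_i||a_j\cdots a_{i-1}|+|a_j||a_{j+1}\cdots a_{i-1}|}[a_r,\dots,a_{i+1},a_j,a_{i-1},\dots,a_{j+1},a_i,a_{j-1},\dots,a_1]_R.$$
   Context: A GDN superalgebra is a superalgebra $\mathcal A=\mathcal A_0\oplus\mathcal A_1$ over a field $k$ (product $\circ$, $\mathcal A_i\circ\mathcal A_j\subseteq\mathcal A_{i+j}$ mod 2, $|x|=i$ for nonzero $x\in\mathcal A_i$) satisfying for homogeneous $x,y,z$: $x\circ(y\circ z)-(x\circ y)\circ z=(-1)^{|x||y|}(y\circ(x\circ z)-(y\circ x)\circ z)$ and $(x\circ y)\circ z=(-1)^{|y||z|}(x\circ z)\circ y$. $X=X_0\sqcup X_1$ is well-ordered, elements of $X_i$ have parity $i$, and $\mathrm{GDN}_s(X)$ is the free GDN superalgebra on $X$. Terms over $X$: letters of $X$ and products $(\mu\circ\nu)$ of terms, regarded as elements of $\mathrm{GDN}_s(X)$; length $\ell$ is the number of letters. $[\mu_1,\dots,\mu_n]_R=(\mu_1\circ(\cdots\circ(\mu_{n-1}\circ\mu_n)\cdots))$. Root number: $r(a)=0$ ($a\in X$), $r((\mu\circ\nu))=r(\mu)+1$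 if $\nu\in X$, else $r(\mu)+r(\nu)$. For a string $a_1\cdots a_n$ of letters, $|a_1\cdots a_n|=|a_1|+\dots+|a_n|\pmod 2$, and the empty string has parity $0$. For terms $\mu,\nu$ with $r(\mu)=r(\nu)$, $\ell(\mu)=\ell(\nu)$ and nonzero $\alpha,\beta\in k$, write $\alpha\mu\sim\beta\nu$ if $\alpha\mu-\beta\nu=\sum_i\alpha_i\mu_i$ in $\mathrm{GDN}_s(X)$ for some $\alpha_i\in k$ and terms $\mu_i$ with $\ell(\mu_i)=\ell(\mu)$ and $r(\mu_i)>r(\mu)$. *)

From mathcomp Require Import all_boot all_order all_algebra.
Set Implicit Arguments. Unset Strict Implicit. Unset Printing Implicit Defensive.
Import GRing.Theory.
Local Open Scope ring_scope.

Section GDN.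
Variables (k : fieldType) (X : Type) (par : X -> bool).

Inductive term : Type := Var of X | Mul of term & term.

Fixpoint tpar (t : term) : bool :=
  match t with Var a => par a | Mul u v => tpar u (+) tpar v end.

Fixpoint len (t : term) : nat :=
  match t with Var _ => 1%N | Mul u v => (len u + len v)%N end.

Fixpoint rootn (t : term) : nat :=
  match t with
  | Var _ => 0%N
  | Mul u v => match v with Var _ => (rootn u).+1 | _ => (rootn u + rootn v)%N end
  end.

(* formal linear combinations of terms: sum of c * t over (c,t) in the list *)
Definition lin := seq (k * term).

Inductive feq1 : lin -> lin -> Prop :=
| fe_swap x y p : feq1 (x :: y :: p) (y :: x :: p)
| fe_merge c d t p : feq1 ((c, t) :: (d, t) :: p) ((c + d, t) :: p)
| fe_zero t p : feq1 ((0, t) :: p) p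
| fe_cons x p q : feq1 p q -> feq1 (x :: p) (x :: q).

Definition sgn (b : bool) : k := (-1) ^+ b.

Definition gdn_id1 (x y z : term) : lin :=
  let s := sgn (tpar x && tpar y) in
  [:: (1, Mul x (Mul y z)); (-1, Mul (Mul x y) z);
      (- s, Mul y (Mul x z)); (s, Mul (Mul y x) z)].

Definition gdn_id2 (x y z : term) : lin :=
  [:: (1, Mul (Mul x y) z); (- sgn (tpar y && tpar z), Mul (Mul x z) y)].

Definition lscale (c : k) (p : lin) : lin := map (fun ct => (c * ct.1, ct.2)) p.
Definition lmul (u : term) (p : lin) : lin := map (fun ct => (ct.1, Mul u ct.2)) p.
Definition rmul (u : term) (p : lin) : lin := map (fun ct => (ct.1, Mul ct.2 u)) p.

(* GDNzero p : the formal sum p lies in the two-sided ideal of the free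
   (nonassociative) superalgebra k<X> generated by all instances of the two
   GDN super-identities on homogeneous elements (by multilinearity: on terms);
   i.e. p = 0 in GDN_s(X). *)
Inductive GDNzero : lin -> Prop :=
| gz_nil : GDNzero [::]
| gz_id1 x y z : GDNzero (gdn_id1 x y z)
| gz_id2 x y z : GDNzero (gdn_id2 x y z)
| gz_add p q : GDNzero p -> GDNzero q -> GDNzero (p ++ q)
| gz_scale c p : GDNzero p -> GDNzero (lscale c p)
| gz_lmul u p : GDNzero p -> GDNzero (lmul u p)
| gz_rmul u p : GDNzero p -> GDNzero (rmul u p)
| gz_feq p q : feq1 p q -> GDNzero p -> GDNzero q
| gz_feqV p q : feq1 p q -> GDNzero q -> GDNzero p.

Definition gdn_sim (alpha : k) (mu : term) (beta : k) (nu : term) : Prop :=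
  [/\ alpha != 0, beta != 0, rootn mu = rootn nu, len mu = len nu &
   exists s : lin,
     (forall i, (i < size s)%N ->
        len (nth (0%R : k, mu) s i).2 = len mu /\ (rootn mu < rootn (nth (0%R : k, mu) s i).2)%N) /\
     GDNzero ((alpha, mu) :: (- beta, nu) :: lscale (-1) s)].

(* rnormR b n = [b n, b (n-1), ..., b 1]_R  (for n >= 1; n = 0 unused) *)
Fixpoint rnormR (b : nat -> X) (n : nat) : term :=
  match n with
  | 0 => Var (b 0)
  | n'.+1 => if n' is 0 then Var (b 1) else Mul (Var (b n)) (rnormR b n')
  end.

(* parity |a_lo a_{lo+1} ... a_hi| of a string (false = 0 if empty) *)
Definition spar (a : nat -> X) (lo hi : nat) : bool :=
  \big[addb/false]_(lo <= m < hi.+1) par (a m).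

End GDN.

From mathcomp Require Import all_boot all_order all_algebra zify.
Import GRing.Theory.
Local Open Scope ring_scope.

Set Implicit Arguments. Unset Strict Implicit. Unset Printing Implicit Defensive.

(* Modulo terms of the same length and larger root number, the first GDN
   identity gives x(yw) ~ (-1)^{|x||y|} y(xw) for letters x, y: the correction
   terms (xy)w and (yx)w have root number one more.  Left multiplication
   preserves such relations, so two adjacent letters a_{j+1}, a_j (j >= 2) of
   [a_r, ..., a_1]_R can be exchanged at the price of that sign.  Part (i) moves
   a_j to the front by r - j adjacent exchanges; part (ii) writes the
   transposition (i j) as (j j+1)(i j+1)(j j+1) and inducts on i - j. *)

Section FormalSums.
Variables (k : fieldType) (X : Type) (par : X -> bool).
Local Notation Z := (@GDNzero k X par).

Inductive feq : lin k X -> lin k X -> Prop :=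
| feq_refl p : feq p p
| feq_step p q r : feq1 p q -> feq q r -> feq p r.

Lemma feq_trans p q r : feq p q -> feq q r -> feq p r.
Proof. by elim=> // p0 q0 r0 pq _ IH /IH; apply: feq_step. Qed.

Lemma feq_cons x p q : feq p q -> feq (x :: p) (x :: q).
Proof.
elim=> [p0|p0 q0 r0 pq _ IH]; first exact: feq_refl.
exact: feq_step (fe_cons x pq) IH.
Qed.

Lemma feq_move p x q : feq (p ++ x :: q) (x :: p ++ q).
Proof.
elim: p => [|y p IH] /=; first exact: feq_refl.
apply: feq_trans (feq_cons y IH) _.
exact: feq_step (fe_swap _ _ _) (feq_refl _).
Qed.

Lemma GDNzero_feq p q : feq p q -> Z p -> Z q.
Proof. by elim=> // p0 q0 r0 pq _ IH Zp; apply/IH/(gz_feq pq). Qed.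

Lemma lscaleA (c d : k) (s : lin k X) : lscale c (lscale d s) = lscale (c * d) s.
Proof. by rewrite /lscale -map_comp; apply: eq_map => -[e t] /=; rewrite mulrA. Qed.

Definition higher_terms (m : term X) (s : lin k X) : bool :=
  all (fun ct => (len ct.2 == len m) && (rootn m < rootn ct.2)%N) s.

Lemma gdn_simP (a b : k) (m n : term X) :
  gdn_sim par a m b n <->
  [/\ a != 0, b != 0, rootn m = rootn n, len m = len n &
      exists2 s, higher_terms m s & Z ((a, m) :: (- b, n) :: lscale (-1) s)].
Proof.
split=> -[a0 b0 Er El [s]].
  case=> hs Zs; split=> //; exists s => //.
  by apply/(all_nthP (0, m)) => i /hs[-> ->]; rewrite eqxx.
move=> /(all_nthP (0, m)) hs Zs; split=> //; exists s; split=> // i /hs.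
by case/andP=> /eqP.
Qed.

Lemma gdn_sim_refl (a : k) (m : term X) : a != 0 -> gdn_sim par a m a m.
Proof.
move=> a0; apply/gdn_simP; split=> //; exists [::] => //=.
apply: gz_feqV (fe_merge _ _ _ _) _; rewrite subrr.
exact: gz_feqV (fe_zero _ _) (gz_nil _ _).
Qed.

Lemma gdn_sim_scale (c a b : k) (m n : term X) :
  c != 0 -> gdn_sim par a m b n -> gdn_sim par (c * a) m (c * b) n.
Proof.
move=> c0 /gdn_simP[a0 b0 Er El [s hs Zs]].
apply/gdn_simP; split; rewrite ?mulf_neq0 //; exists (lscale c s).
  by rewrite /higher_terms all_map.
by move: (gz_scale c Zs); rewrite /= mulrN !lscaleA [c * -1]mulrC.
Qed.

Lemma gdn_sim_trans (a b c : k) (m n p : term X) :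
  gdn_sim par a m b n -> gdn_sim par b n c p -> gdn_sim par a m c p.
Proof.
move=> /gdn_simP[a0 b0 Er El [s1 hs1 Z1]] /gdn_simP[_ c0 Er' El' [s2 hs2 Z2]].
move: hs2; rewrite /higher_terms -Er -El => hs2.
apply/gdn_simP; split; rewrite ?Er ?El //; exists (s1 ++ s2).
  by rewrite /higher_terms all_cat; apply/andP.
have Z12 := gz_add Z1 Z2; rewrite /= in Z12.
have {Z12} := GDNzero_feq (feq_cons _ (feq_cons _ (feq_move _ _ _))) Z12.
move=> /(gz_feq (fe_cons _ (fe_merge _ _ _ _))); rewrite addNr.
move=> /(gz_feq (fe_cons _ (fe_zero _ _))) /(GDNzero_feq (feq_cons _ (feq_move _ _ _))).
by rewrite /lscale map_cat.
Qed.

Lemma gdn_sim_mul (e f : k) (m n p : term X) :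
  gdn_sim par 1 m e n -> gdn_sim par 1 n f p -> gdn_sim par 1 m (e * f) p.
Proof.
move=> mn np; have [_ e0 _ _ _] := mn.
apply: gdn_sim_trans mn _.
by rewrite -[X in gdn_sim _ X]mulr1; apply: gdn_sim_scale.
Qed.

Lemma sgn_addb (b1 b2 : bool) : sgn k b1 * sgn k b2 = sgn k (b1 (+) b2).
Proof. by rewrite /sgn signr_addb. Qed.

Lemma rootn_Mul (u t : term X) :
  (1 < len t)%N -> rootn (Mul u t) = (rootn u + rootn t)%N.
Proof. by case: t. Qed.

Lemma gdn_sim_lmul (u : term X) (a b : k) (m n : term X) :
  (1 < len m)%N -> gdn_sim par a m b n -> gdn_sim par a (Mul u m) b (Mul u n).
Proof.
move=> m1 /gdn_simP[a0 b0 Er El [s hs Zs]].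
have n1 : (1 < len n)%N by rewrite -El.
apply/gdn_simP; split=> //; first by rewrite !rootn_Mul // Er.
  by rewrite /= El.
exists (lmul u s).
  rewrite /higher_terms all_map; apply: sub_all hs => -[c t] /andP[/eqP lt rt].
  move: rt; rewrite -(ltn_add2l (rootn u)) -!rootn_Mul ?lt // => rt.
  by apply/andP; split; [rewrite /= lt | exact: rt].
by move: (gz_lmul u Zs); rewrite /= /lmul /lscale -!map_comp.
Qed.

Lemma gdn_sim_swap_letters (x y : X) (w : term X) :
  gdn_sim par 1 (Mul (Var x) (Mul (Var y) w)) (sgn k (par x && par y))
               (Mul (Var y) (Mul (Var x) w)).
Proof.
set e := sgn k _.
apply/gdn_simP; split; rewrite ?oner_neq0 ?signr_eq0 /= ?addnCA //.
exists [:: (1, Mul (Mul (Var x) (Var y)) w); (- e, Mul (Mul (Var y) (Var x)) w)].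
  by case: w => [z|u v] /=; lia.
rewrite /= mulr1 mulN1r opprK.
exact: gz_feq (fe_cons _ (fe_swap _ _ _)) (@gz_id1 k X par (Var x) (Var y) w).
Qed.

End FormalSums.

Definition swapn (i j m : nat) : nat :=
  if m == i then j else if m == j then i else m.

Definition rotn (r j m : nat) : nat :=
  if m == r then j else if (j <= m)%N then m.+1 else m.

Lemma swapnL i j : swapn i j i = j.
Proof. by rewrite /swapn eqxx. Qed.

Lemma swapnR i j : swapn i j j = i.
Proof. by rewrite /swapn; case: eqVneq => [->|]; rewrite ?eqxx. Qed.

Lemma swapnD i j m : m != i -> m != j -> swapn i j m = m.
Proof. by rewrite /swapn => /negPf-> /negPf->. Qed.

Lemma swapnC i j m : swapn i j m = swapn j i m.
Proof. by rewrite /swapn; do ![case: ifP => ?]; lia. Qed.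

Lemma swapnJ i j m : (j.+1 < i)%N ->
  swapn j j.+1 (swapn i j.+1 (swapn j j.+1 m)) = swapn i j m.
Proof.
move=> ji; rewrite [swapn j j.+1 m]/swapn; do ![case: ifP => ?];
  rewrite [swapn i j.+1 _]/swapn; do ![case: ifP => ?]; rewrite /swapn;
  do ![case: ifP => ?]; lia.
Qed.

Lemma rotnn r m : (m <= r)%N -> rotn r r m = m.
Proof. by rewrite /rotn => ?; do ![case: ifP => ?]; lia. Qed.

Lemma swapn_rotn r j m : (j < r)%N -> (m <= r)%N ->
  swapn j j.+1 (rotn r j.+1 m) = rotn r j m.
Proof.
by rewrite /rotn => ? ?; do ![case: ifP => ?]; rewrite /swapn; do ![case: ifP => ?]; lia.
Qed.

Section Reordering.
Variables (k : fieldType) (X : Type) (par : X -> bool).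

Lemma rnormR_succ (b : nat -> X) n :
  (0 < n)%N -> rnormR b n.+1 = Mul (Var (b n.+1)) (rnormR b n).
Proof. by case: n. Qed.

Lemma len_rnormR (b : nat -> X) n : (0 < n)%N -> len (rnormR b n) = n.
Proof.
elim: n => // n IH _; case: n IH => // n IH.
by rewrite rnormR_succ //= IH.
Qed.

Lemma eq_rnormR (b b' : nat -> X) n :
  (forall m, (m <= n)%N -> b m = b' m) -> rnormR b n = rnormR b' n.
Proof.
elim: n => [|n IH] eqb /=; first by rewrite eqb.
case: n IH eqb => [|n] IH eqb; first by rewrite eqb.
by rewrite eqb // IH // => m mn; apply: eqb; apply: leqW.
Qed.

Lemma eq_spar (b b' : nat -> X) lo hi :
  (forall m, (lo <= m <= hi)%N -> b m = b' m) -> spar par b lo hi = spar par b' lo hi.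
Proof. by move=> eqb; apply: eq_big_nat => m mlh; rewrite eqb //; lia. Qed.

Lemma spar_cons (b : nat -> X) lo hi :
  (lo <= hi)%N -> spar par b lo hi = par (b lo) (+) spar par b lo.+1 hi.
Proof. by move=> lohi; rewrite /spar big_ltn. Qed.

Lemma spar_nil (b : nat -> X) lo hi : (hi < lo)%N -> spar par b lo hi = false.
Proof. by move=> hilo; rewrite /spar big_geq. Qed.

Lemma gdn_sim_rnormR_swap (a : nat -> X) r j : (2 <= j < r)%N ->
  gdn_sim par 1 (rnormR a r) (sgn k (par (a j.+1) && par (a j)))
    (rnormR (a \o swapn j j.+1) r).
Proof.
case/andP=> j2; elim: r => // r IH; rewrite ltnS leq_eqVlt => /predU1P[<-|jr].
  case: j j2 {IH} => [|[|j]] // _.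
  rewrite !(@rnormR_succ _ j.+2) // !(@rnormR_succ _ j.+1) // /comp swapnL swapnR.
  rewrite (@eq_rnormR _ a j.+1) => [|m mj]; first exact: gdn_sim_swap_letters.
  by rewrite swapnD //; lia.
have r0 : (0 < r)%N by lia.
rewrite !rnormR_succ //= swapnD; try lia.
by apply: gdn_sim_lmul; [rewrite len_rnormR //; lia | exact: IH].
Qed.

Lemma gdn_sim_rnormR_rot (a : nat -> X) r j : (2 <= j <= r)%N ->
  gdn_sim par 1 (rnormR a r) (sgn k (par (a j) && spar par a j.+1 r))
    (rnormR (a \o rotn r j) r).
Proof.
move=> /andP[j2 jr]; move Ed: (r - j)%N => d.
elim: d j a Ed j2 jr => [|d IH] j a Ed j2 jr.
  have -> : j = r by lia.
  rewrite spar_nil // andbF (@eq_rnormR _ a) => [|m mr]; last by rewrite /comp rotnn.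
  exact: gdn_sim_refl (oner_neq0 _).
have jr1 : (j < r)%N by lia.
have Ed1 : (r - j.+1)%N = d by lia.
have j2r : (2 <= j < r)%N by rewrite j2.
have := gdn_sim_mul (gdn_sim_rnormR_swap a j2r) (IH j.+1 _ Ed1 (leqW j2) jr1).
rewrite (@eq_rnormR (_ \o rotn r j.+1) (a \o rotn r j)) => [|m mr]; last first.
  by rewrite /comp swapn_rotn.
rewrite /comp swapnR (@eq_spar _ a) => [|m mr]; last by rewrite swapnD //; lia.
rewrite (spar_cons _ jr1) sgn_addb.
by case: (par (a j)); case: (par (a j.+1)).
Qed.

Lemma gdn_sim_rnormR_transp (a : nat -> X) r i j : (2 <= j)%N -> (j < i <= r)%N ->
  gdn_sim par 1 (rnormR a r)
    (sgn k ((par (a i) && spar par a j i.-1) (+) (par (a j) && spar par a j.+1 i.-1)))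
    (rnormR (a \o swapn i j) r).
Proof.
move=> j2 /andP[ji ir]; move Ed: (i - j.+1)%N => d.
elim: d j a Ed j2 ji => [|d IH] j a Ed j2 ji.
  have -> : i = j.+1 by lia.
  have j2r : (2 <= j < r)%N by rewrite j2; lia.
  rewrite /= (spar_nil _ (ltnSn j)) andbF addbF (spar_cons _ (leqnn j)).
  rewrite (spar_nil _ (ltnSn j)) addbF.
  rewrite (@eq_rnormR (a \o swapn j.+1 j) (a \o swapn j j.+1)) => [|m _].
    exact: gdn_sim_rnormR_swap.
  by rewrite /comp swapnC.
have j2r : (2 <= j < r)%N by rewrite j2; lia.
have ji1 : (j.+1 < i)%N by lia.
have Ed1 : (i - j.+2)%N = d by lia.
set b := a \o swapn j j.+1.
have := gdn_sim_mul (gdn_sim_mul (gdn_sim_rnormR_swap a j2r) (IH j.+1 b Ed1 (leqW j2) ji1))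
  (gdn_sim_rnormR_swap (b \o swapn i j.+1) j2r).
rewrite (@eq_rnormR (_ \o swapn j j.+1) (a \o swapn i j)) => [|m _]; last first.
  by rewrite /b /comp swapnJ.
have ji2 : (j.+1 <= i.-1)%N by lia.
rewrite (spar_cons b ji2) (@eq_spar b a) => [|m mi]; last by rewrite /b /comp swapnD //; lia.
have bi : swapn j j.+1 i = i by rewrite swapnD //; lia.
have tj : swapn i j.+1 j = j by rewrite swapnD //; lia.
rewrite /b /comp !swapnR bi tj swapnL (spar_cons a (ltnW ji2)) (spar_cons a ji2) !sgn_addb.
by case: (par (a i)); case: (par (a j)); case: (par (a j.+1)); case: spar.
Qed.
End Reordering.

Theorem lemma2p8 (k : fieldType) (X : Type) (par : X -> bool)
  (hk : (2%:R : k) != 0) (r : nat) (a : nat -> X) :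
  (forall j : nat, (2 <= j < r)%N ->
     gdn_sim par 1 (rnormR a r)
       (sgn k (par (a j) && spar par a j.+1 r))
       (rnormR (fun m => if m == r then a j
                         else if (j <= m)%N then a m.+1 else a m) r))
  /\
  (forall i j : nat, (2 <= j)%N -> (j < i)%N -> (i <= r)%N ->
     gdn_sim par 1 (rnormR a r)
       (sgn k ((par (a i) && spar par a j i.-1)
               (+) (par (a j) && spar par a j.+1 i.-1)))
       (rnormR (fun m => if m == i then a j
                         else if m == j then a i else a m) r)).
Proof.
split=> [j /andP[j2 jr] | i j j2 ji ir].
  rewrite [X in gdn_sim _ _ _ _ X](@eq_rnormR _ _ (a \o rotn r j)) => [|m _].
    by apply: gdn_sim_rnormR_rot; rewrite j2 ltnW.
  by rewrite /comp /rotn !(fun_if a).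
rewrite [X in gdn_sim _ _ _ _ X](@eq_rnormR _ _ (a \o swapn i j)) => [|m _].
  by apply: gdn_sim_rnormR_transp; rewrite ?ji.
by rewrite /comp /swapn !(fun_if a).
Qed.
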